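(* For every forest $F$, $A(F)=\{x\in T(r_1;F): P(x)\succ\max\{\tfrac12P(r_1),P(r_2)\}\}$, where $P(x)\succ\frac12P(r_1)$ means $P(x)>\frac12P(r_1)$ or ($P(x)=\frac12P(r_1)$ and $x<r_1$), and $P(x)\succ P(r_2)$ means $P(x)>P(r_2)$ or ($P(x)=P(r_2)$ and $x<r_2$).
   Context: Let $N$ be a finite, totally ordered set of vertices. A directed forest on $N$ is a directed acyclic graph on $N$ with every out-degree at most $1$. For a forest $F$: roots are vertices with no out-edge; $T(x;F)$ is the subtree rooted at $x$ (vertices with a directed path to $x$, including $x$); $P(x)=|T(x;F)|$; $F_x$ is $F$ with the out-edge of $x$ removed (if any). Write $P(x)\succ P(y)$ iff $P(x)>P(y)$ or ($P(x)=P(y)$ and $x<y$); let $r_1,r_2,\dots$ be the roots of $F$ in decreasing $\succ$-order, and $r_1(F')$ the $\succ$-maximal root of a forest $F'$. $A(F)=\{x\in N: x=r_1(F_x)\}$. If $F$ has only one root, the condition involving $r_2$ is considered vacuous. *)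

From mathcomp Require Import all_boot all_order.
Set Implicit Arguments. Unset Strict Implicit. Unset Printing Implicit Defensive.
Import Order.TTheory.

(* A directed graph on T with out-degree <= 1 is encoded by its "parent"
   function F : T -> option T  (F x = Some y  iff  x -> y is an edge). *)
Definition edge (T : finType) (F : T -> option T) : rel T :=
  fun y z => F y == Some z.

Definition acyclic (T : finType) (F : T -> option T) : Prop :=
  forall x y, F x = Some y -> ~~ connect (edge F) y x.

Definition subtree (T : finType) (F : T -> option T) (x : T) : {set T} :=
  [set y | connect (edge F) y x].

Definition P (T : finType) (F : T -> option T) (x : T) : nat := #|subtree F x|.

Definition is_root (T : finType) (F : T -> option T) (x : T) : bool :=
  F x == None.

Definition succP d (T : finOrderType d) (F : T -> option T) (x y : T) : bool :=
  (P F y < P F x)%N || ((P F x == P F y) && (x < y)%O).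

Definition is_r1 d (T : finOrderType d) (F : T -> option T) (r : T) : Prop :=
  is_root F r /\ forall r', is_root F r' -> r' != r -> succP F r r'.

Definition is_r2 d (T : finOrderType d) (F : T -> option T) (r1 r2 : T) : Prop :=
  [/\ is_root F r2, r2 != r1 &
      forall r', is_root F r' -> r' != r1 -> r' != r2 -> succP F r2 r'].

Definition cut (T : finType) (F : T -> option T) (x : T) : T -> option T :=
  fun y => if y == x then None else F y.

Definition inA d (T : finOrderType d) (F : T -> option T) (x : T) : Prop :=
  is_r1 (cut F x) x.

From mathcomp Require Import all_boot all_order.
From mathcomp Require Import zify.
Import Order.TTheory.
Set Implicit Arguments. Unset Strict Implicit.

(* Cutting the out-edge of x turns x into a new root, keeps P(x), lowers P by
   P(x) on the strict ancestors of x and leaves it unchanged everywhere else.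
   If x hangs below a root r <> r_1, then P(x) <= P(r) and r_1 beats r, so r_1,
   which the cut does not affect, still beats x.  If x hangs below r_1, the roots of F_x are x,
   r_1 (now of size P(r_1) - P(x)) and the other roots of F, untouched: x beats
   r_1 iff P(x) beats P(r_1)/2, and x beats every other root iff it beats r_2. *)

Section Forest.
Variables (T : finType) (G : T -> option T).

Lemma connect_parent y w :
  connect (edge G) y w -> w = y \/ exists2 u, G y = Some u & connect (edge G) u w.
Proof.
case/connectP=> [[|u p]] /= => [_ -> | /andP [e pp] ->]; first by left.
by right; exists u; [apply/eqP | apply/connectP; exists p].
Qed.

Lemma root_connect_eq z w : G z = None -> connect (edge G) z w -> w = z.
Proof. by move=> Gz /connect_parent [//|[u]]; rewrite Gz. Qed.

Lemma connect_chain y z w :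
  connect (edge G) y z -> connect (edge G) y w ->
  connect (edge G) z w || connect (edge G) w z.
Proof.
case/connectP=> p; elim: p y => [|u p IHp] y /=; first by move=> _ -> ->.
case/andP=> e pp Ez cyw; case: (connect_parent cyw) => [->|[u' Gy cuw]].
  by rewrite orbC Ez; apply/orP; left; apply/connectP; exists (u :: p); rewrite /= ?e.
by move: Gy cuw; rewrite (eqP e) => -[<-]; exact: IHp pp Ez.
Qed.

Lemma connect_root_uniq y r s :
  is_root G r -> is_root G s -> connect (edge G) y r -> connect (edge G) y s ->
  r = s.
Proof.
move=> /eqP Gr /eqP Gs cyr cys.
by case/orP: (connect_chain cyr cys) => [/(root_connect_eq Gr) | /(root_connect_eq Gs)].
Qed.

Lemma P_gt0 z : (0 < P G z)%N.
Proof. by apply/card_gt0P; exists z; rewrite inE connect0. Qed.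

Lemma subtree_connect u w :
  connect (edge G) u w -> subtree G u \subset subtree G w.
Proof. by move=> cuw; apply/subsetP => y; rewrite !inE => /connect_trans; apply. Qed.

Hypothesis acG : acyclic G.

Lemma connect_antisym y z :
  connect (edge G) y z -> connect (edge G) z y -> y = z.
Proof.
move=> cyz czy; case: (connect_parent cyz) => [//|[u Gy cuz]].
by have := acG Gy; rewrite (connect_trans cuz czy).
Qed.

Lemma P_connect_lt v w :
  connect (edge G) v w -> v != w -> (P G v < P G w)%N.
Proof.
move=> cvw nvw; case: (connect_parent cvw) => [Ewv|[u Gv cuw]].
  by rewrite Ewv eqxx in nvw.
apply: (leq_trans _ (subset_leq_card (subtree_connect cuw))).
apply: proper_card; apply/properP; split.
  by apply: subtree_connect; apply: connect1; rewrite /edge Gv.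
by exists u; rewrite inE ?connect0 //; apply: acG.
Qed.

Lemma acyclic_root_exists v : exists2 r, is_root G r & connect (edge G) v r.
Proof.
case: (arg_maxnP (P G) (connect0 (edge G) v)) => r cvr maxr.
exists r => //; apply/eqP; case Gr: (G r) => [u|] //.
have cru : connect (edge G) r u by apply: connect1; rewrite /edge Gr.
have nru : r != u by apply: contraTneq (acG Gr) => <-; rewrite connect0.
by have := maxr u (connect_trans cvr cru); rewrite /= leqNgt (P_connect_lt cru nru).
Qed.

End Forest.

Section Cut.
Variables (T : finType) (G : T -> option T) (x : T).

Lemma is_root_cut z : is_root (cut G x) z = (z == x) || is_root G z.
Proof. by rewrite /is_root /cut; case: (z == x). Qed.

Lemma connect_cut y z : connect (edge (cut G x)) y z -> connect (edge G) y z.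
Proof.
apply: connect_sub => a b; rewrite /edge /cut => e; apply: connect1.
by move: e; case: (a == x).
Qed.

Lemma connect_cut_split y z : connect (edge G) y z ->
  connect (edge (cut G x)) y z \/
  connect (edge (cut G x)) y x /\ connect (edge G) x z.
Proof.
case/connectP=> p; elim: p y => [|u p IHp] y /=.
  by move=> _ ->; left; rewrite connect0.
case/andP=> e pp Ez; case: (eqVneq y x) => [<-|nyx].
  by right; split; [rewrite connect0 | apply/connectP; exists (u :: p) => //=; rewrite e].
have e' : edge (cut G x) y u by rewrite /edge /cut (negbTE nyx).
case: (IHp u pp Ez) => [c | [c1 c2]].
  by left; apply: connect_trans (connect1 e') c.
by right; split=> //; apply: connect_trans (connect1 e') c1.
Qed.

Lemma connect_cut_self y :
  connect (edge (cut G x)) y x = connect (edge G) y x.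
Proof.
by apply/idP/idP; [apply: connect_cut | case/connect_cut_split=> [|[]]].
Qed.

Lemma P_cut_self : P (cut G x) x = P G x.
Proof. by apply: eq_card => y; rewrite !inE connect_cut_self. Qed.

Lemma P_cut_far z : ~~ connect (edge G) x z -> P (cut G x) z = P G z.
Proof.
move=> ncxz; apply: eq_card => y; rewrite !inE.
apply/idP/idP; first exact: connect_cut.
by case/connect_cut_split=> [//|[_ cxz]]; rewrite cxz in ncxz.
Qed.

Lemma P_cut_ancestor z : acyclic G -> connect (edge G) x z -> z != x ->
  P G z = (P (cut G x) z + P G x)%N.
Proof.
move=> acG cxz nzx.
have subtreeU : subtree G z = subtree (cut G x) z :|: subtree G x.
  apply/setP => y; rewrite !inE; apply/idP/orP.
    by case/connect_cut_split=> [c | [c _]]; [left | right; apply: connect_cut c].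
  by case=> [/connect_cut // | cyx]; apply: connect_trans cyx cxz.
have subtreeI : subtree (cut G x) z :&: subtree G x = set0.
  apply/setP => y; rewrite !inE; apply/negP => /andP [cyz].
  rewrite -connect_cut_self => cyx'.
  case/orP: (connect_chain cyz cyx') => [/connect_cut czx | cxz'].
    by rewrite (connect_antisym acG czx cxz) eqxx in nzx.
  have cut_x : cut G x x = None by rewrite /cut eqxx.
  by rewrite (root_connect_eq cut_x cxz') eqxx in nzx.
by rewrite /P subtreeU -cardsUI subtreeI cards0 addn0.
Qed.

End Cut.

Section Precedence.
Variables (d : Order.disp_t) (T : finOrderType d) (G : T -> option T).

Definition succ_key (a : T) : nat *l T^d := (P G a, a : T^d).

Lemma succPE a b : succP G a b = (succ_key b < succ_key a)%O.
Proof.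
by rewrite /succP ltEprodlexi /= !leEnat ltEdual; case: ltngtP => //= ->.
Qed.

Lemma succ_key_inj : injective succ_key.
Proof. by move=> a b [_]. Qed.

Lemma succP_asym a b : succP G a b -> ~~ succP G b a.
Proof. by rewrite !succPE => /lt_gtF ->. Qed.

Lemma succP_trans b a c : succP G a b -> succP G b c -> succP G a c.
Proof. by rewrite !succPE => ab bc; apply: lt_trans bc ab. Qed.

Lemma succP_max_exists (A : {pred T}) a : a \in A ->
  exists2 m, m \in A & forall y, y \in A -> y != m -> succP G m y.
Proof.
move=> Aa; case: (arg_maxP succ_key Aa) => m Am maxm.
exists m => // y Ay nym.
by rewrite succPE lt_neqAle (inj_eq succ_key_inj) nym; apply: maxm.
Qed.

Lemma succP_connect a y z : acyclic G -> connect (edge G) y z ->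
  succP G a z -> succP G a y.
Proof.
move=> acG cyz; case: (eqVneq y z) => [-> //|nyz].
by move/succP_trans; apply; rewrite /succP P_connect_lt.
Qed.

Lemma succP_other_roots r1 a :
  (forall r2, is_r2 G r1 r2 -> succP G a r2) ->
  forall r, is_root G r -> r != r1 -> succP G a r.
Proof.
move=> succ_r2 r rootr nrr1.
have rA : r \in [pred s | is_root G s & s != r1] by rewrite inE rootr.
have [m /andP [rootm nmr1] maxm] := succP_max_exists rA.
have succ_am : succP G a m.
  by apply: succ_r2; split=> // s roots nsr1 nsm; apply: maxm; rewrite ?inE ?roots.
case: (eqVneq r m) => [-> // | nrm].
by apply: succP_trans succ_am (maxm _ _ nrm); rewrite inE rootr.
Qed.

Lemma succP_cut_far x z : ~~ connect (edge G) x z ->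
  succP (cut G x) x z = succP G x z.
Proof. by move=> ncxz; rewrite /succP P_cut_self P_cut_far. Qed.

Lemma succP_cut_ancestor x z : acyclic G -> connect (edge G) x z -> z != x ->
  succP (cut G x) x z =
  (P G z < 2 * P G x)%N || ((2 * P G x == P G z) && (x < z)%O).
Proof.
move=> acG cxz nzx; rewrite /succP P_cut_self (P_cut_ancestor acG cxz nzx).
by case: (x < z)%O; rewrite ?andbT ?andbF ?orbF; lia.
Qed.

Lemma inA_roots x :
  inA G x <-> forall r, is_root G r -> r != x -> succP (cut G x) x r.
Proof.
split=> [[_ succ_x] r rootr nrx | succ_x].
  by apply: succ_x; rewrite // is_root_cut rootr orbT.
split=> [|r]; first by rewrite is_root_cut eqxx.
by rewrite is_root_cut => /orP [/eqP -> | rootr]; [rewrite eqxx | apply: succ_x].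
Qed.

Lemma inA_subtree r1 x : acyclic G -> is_r1 G r1 -> inA G x -> x \in subtree G r1.
Proof.
move=> acG [root_r1 max_r1] /inA_roots succ_x; rewrite inE.
apply/negPn/negP => ncxr1.
have [r rootr cxr] := acyclic_root_exists acG x.
have nrr1 : r != r1 by apply: contraNneq ncxr1 => <-.
have nr1x : r1 != x by apply: contraNneq ncxr1 => ->; rewrite connect0.
have := succP_asym (succP_connect acG cxr (max_r1 r rootr nrr1)).
by rewrite -succP_cut_far // succ_x.
Qed.

End Precedence.

Theorem claim2 (d : Order.disp_t) (T : finOrderType d) (F : T -> option T) (r1 : T) :
  acyclic F -> is_r1 F r1 ->
  forall x : T,
    inA F x <->
    [/\ x \in subtree F r1,
        (P F r1 < 2 * P F x)%N || ((2 * P F x == P F r1) && (x < r1)%O)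
      & forall r2, is_r2 F r1 r2 -> succP F x r2].
Proof.
move=> acF r1F x; have [root_r1 _] := r1F.
have far_roots r : is_root F r -> r != r1 -> x \in subtree F r1 ->
    ~~ connect (edge F) x r.
  move=> rootr nrr1; rewrite inE => cxr1; apply: contra nrr1 => cxr.
  by apply/eqP; apply: connect_root_uniq rootr root_r1 cxr cxr1.
split=> [A_x | [xr1 half_x succ_r2]]; last first.
  have cxr1 : connect (edge F) x r1 by rewrite inE in xr1.
  apply/inA_roots => r rootr; case: (eqVneq r r1) => [-> nr1x | nrr1 _].
    by rewrite succP_cut_ancestor.
  by rewrite succP_cut_far ?far_roots //; apply: succP_other_roots succ_r2 r rootr nrr1.
have xr1 := inA_subtree acF r1F A_x.
move/inA_roots: A_x => succ_x; split=> //.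
  case: (eqVneq r1 x) => [<- | nr1x]; first by rewrite ltn_Pmull ?P_gt0.
  have cxr1 : connect (edge F) x r1 by rewrite inE in xr1.
  by rewrite -(succP_cut_ancestor acF cxr1 nr1x); apply: succ_x.
move=> r2 [root_r2 nr2r1 _]; have ncxr2 := far_roots r2 root_r2 nr2r1 xr1.
rewrite -succP_cut_far //; apply: succ_x => //.
by apply: contraNneq ncxr2 => ->; rewrite connect0.
Qed.
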